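(* Let $(x_n)$ be a nonincreasing interval-filling sequence of positive reals with cardinal function $f$. Then $\mathrm{rng}(f)=\{1,2\}$ if and only if there exists $c>0$ such that $x_n=c/2^n$ for every $n\in\mathbb{N}$.
   Context: For a summable sequence $\mathbf{x}=(x_n)$ of positive reals, $\mathcal{A}(\mathbf{x})=\{\sum_{n\in A}x_n: A\subseteq\mathbb{N}\}$ is its achievement set and its cardinal function $f$ assigns to $x\in\mathcal{A}(\mathbf{x})$ the cardinality (a positive integer, $\omega$, or $\mathfrak{c}$) of $\{(\varepsilon_n)\in\{0,1\}^{\mathbb{N}}:\sum\varepsilon_nx_n=x\}$. The sequence is interval-filling if $\mathcal{A}(\mathbf{x})$ is an interval. *)

From HB Require Import structures.
From mathcomp Require Import all_boot all_order all_algebra.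
From mathcomp Require Import all_classical all_reals all_analysis.
Set Implicit Arguments. Unset Strict Implicit. Unset Printing Implicit Defensive.
Import Order.TTheory GRing.Theory Num.Theory.
Import numFieldNormedType.Exports.
Local Open Scope classical_set_scope.
Local Open Scope ring_scope.

(* sum_{n in A} x_n, with A coded by its indicator eps : nat -> bool,
   converges to y *)
Definition subsum_to {R : realType} (x : nat -> R) (eps : nat -> bool) (y : R) : Prop :=
  (fun N => \sum_(0 <= n < N) (if eps n then x n else 0)) @ \oo --> y.

Definition summable_seq {R : realType} (x : nat -> R) : Prop :=
  exists l : R, (fun N => \sum_(0 <= n < N) x n) @ \oo --> l.

Definition achievement_set {R : realType} (x : nat -> R) : set R :=
  [set y | exists eps, subsum_to x eps y].

(* the set whose cardinality is the cardinal function f(y) *)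
Definition representations {R : realType} (x : nat -> R) (y : R) : set (nat -> bool) :=
  [set eps | subsum_to x eps y].

Definition interval_filling {R : realType} (x : nat -> R) : Prop :=
  forall a b z, achievement_set x a -> achievement_set x b ->
    a <= z -> z <= b -> achievement_set x z.

Definition nonincr_seq {R : realType} (x : nat -> R) : Prop :=
  forall n, x n.+1 <= x n.

Definition card_fn_is {R : realType} (x : nat -> R) (y : R) (k : nat) : Prop :=
  (representations x y #= `I_k)%card.

Definition range_card_fn_12 {R : realType} (x : nat -> R) : Prop :=
  (forall y, achievement_set x y -> card_fn_is x y 1 \/ card_fn_is x y 2) /\
  (exists y, achievement_set x y /\ card_fn_is x y 1) /\
  (exists y, achievement_set x y /\ card_fn_is x y 2).

From HB Require Import structures.
From mathcomp Require Import all_boot all_order all_algebra.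
From mathcomp Require Import all_classical all_reals all_analysis.
From mathcomp Require Import ring lra.
Import Order.TTheory GRing.Theory Num.Theory.
Import numFieldNormedType.Exports.
Local Open Scope classical_set_scope.
Local Open Scope ring_scope.

(* Write r_k for the tail sum of x from index k on.  Interval filling forces
   Kakeya's condition x_n <= r_(n+1), under which the greedy algorithm
   represents every point of [0, r_n] by indices >= n.  If x_n < r_(n+1), then
   for a large m the point x_n + x_m has three representations: {n, m},
   {n} together with a greedy representation of x_m above m, and a greedy
   representation of x_n + x_m above n.  So rng(f) = {1, 2} forces x_n = r_(n+1),
   i.e. x_n = 2 x_(n+1).  Conversely, when x_n = c / 2^n we have r_(k+1) = x_k,
   so two distinct representations of one point, compared at the first index
   where they differ, end in all zeros and all ones respectively: every point
   has at most two representations, 0 has one and x_0 has two. *)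

Section Cardinality.
Context {T : Type}.
Implicit Type S : set T.

Lemma card_le_I_inj S n : (S #<= `I_n)%card ->
  exists2 f : T -> nat, {in S &, injective f} & forall a, S a -> (f a < n)%N.
Proof.
move=> /pcard_leP[f]; exists f => [|a Sa]; first exact: inj.
exact: (@funS _ _ _ _ f a Sa).
Qed.

Lemma card_le_I1_eq S a b : (S #<= `I_1)%card -> S a -> S b -> a = b.
Proof.
move=> /card_le_I_inj[f finj f1] Sa Sb; apply: finj; rewrite ?inE //.
by have := f1 _ Sa; have := f1 _ Sb; rewrite !ltnS !leqn0 => /eqP -> /eqP ->.
Qed.

Lemma card_le_I2_no_three S a b c : (S #<= `I_2)%card -> S a -> S b -> S c ->
  a <> b -> a <> c -> b <> c -> False.
Proof.
move=> /card_le_I_inj[f finj f2] Sa Sb Sc ab ac bc.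
have fneq u v : S u -> S v -> u <> v -> f u <> f v.
  by move=> Su Sv uv /finj; rewrite !inE => /(_ Su Sv).
move: (fneq _ _ Sa Sb ab) (fneq _ _ Sa Sc ac) (fneq _ _ Sb Sc bc).
move: (f2 _ Sa) (f2 _ Sb) (f2 _ Sc).
by case: (f a) => [|[|?]] //; case: (f b) => [|[|?]] //; case: (f c) => [|[|?]].
Qed.

Lemma card_le_I2_cases S : S !=set0 -> (S #<= `I_2)%card ->
  (S #= `I_1)%card \/ (S #= `I_2)%card.
Proof.
move=> [a Sa] S_le2.
have [n Sn] : finite_set S by apply: card_le_finite S_le2 (finite_II 2).
have /card_eqPle[S_le_n n_le_S] := Sn.
have n_le2 : (n <= 2)%N by rewrite -card_le_II (card_le_trans n_le_S S_le2).
have n_ge1 : (1 <= n)%N.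
  rewrite -card_le_II -(card_le_eql (@card_set1 _ a)); apply: card_le_trans S_le_n.
  by apply: subset_card_le => _ ->.
by clear S_le_n n_le_S; case: n n_ge1 n_le2 Sn => [|[|[|]]] // _ _ Sn; [left | right].
Qed.

Lemma card_eq_I1_I2_le S :
  (S #= `I_1)%card \/ (S #= `I_2)%card -> (S #<= `I_2)%card.
Proof.
by case=> /card_eqPle[+ _] => /card_le_trans; apply; rewrite card_le_II.
Qed.

End Cardinality.

Lemma exists_first_diff (T : eqType) (e d : nat -> T) : e <> d ->
  exists k, e k <> d k /\ forall i, (i < k)%N -> e i = d i.
Proof.
move=> ed; have diff : exists k, e k != d k.
  apply: contra_notP ed => no_diff; apply: funext => i; apply/eqP.
  by apply: contra_notT no_diff => ?; exists i.
case: (ex_minnP diff) => k /eqP ekdk k_min; exists k; split=> // i ik; apply/eqP.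
by apply: contraTT ik => /k_min; rewrite -leqNgt.
Qed.

Definition partial_subsum {R : realType} (x : nat -> R) (e : nat -> bool) (N : nat) : R :=
  \sum_(0 <= n < N) (if e n then x n else 0).

(* [lim] would be a junk value for a divergent sequence; here every subseries
   converges (cvg_partial_subsum). *)
Definition subsum {R : realType} (x : nat -> R) (e : nat -> bool) : R :=
  lim (partial_subsum x e N @[N --> \oo]).

Definition tail {R : realType} (x : nat -> R) (k : nat) : R :=
  subsum x (fun i => (k <= i)%N).

Section Subsums.
Context {R : realType} {x : nat -> R}.
Hypotheses (x_gt0 : forall n, 0 < x n) (x_summable : summable_seq x).
Implicit Types e d : nat -> bool.

Lemma le_partial_subsum e d N :
  (forall i, e i -> d i) -> partial_subsum x e N <= partial_subsum x d N.
Proof.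
move=> ed; apply: ler_sum => i _.
case: (boolP (e i)) => [/ed -> //|_]; by case: (d i) => //; exact: ltW.
Qed.

Lemma nondecreasing_partial_subsum e : nondecreasing_seq (partial_subsum x e).
Proof.
move=> n m nm; rewrite /partial_subsum (big_cat_nat (leq0n n) nm) /= lerDl.
by apply: sumr_ge0 => i _; case: (e i) => //; exact: ltW.
Qed.

Lemma cvg_partial_subsum e : partial_subsum x e N @[N --> \oo] --> subsum x e.
Proof.
have [L xL] := x_summable.
have {}xL : partial_subsum x (fun=> true) N @[N --> \oo] --> L := xL.
have full_le_L N : partial_subsum x (fun=> true) N <= L.
  rewrite -(cvg_lim _ xL) //; apply: nondecreasing_cvgn_le.
    exact: nondecreasing_partial_subsum.
  by apply/cvg_ex; exists L.
apply: nondecreasing_is_cvgn; first exact: nondecreasing_partial_subsum.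
by exists L => _ [N _ <-]; apply: le_trans (full_le_L N); exact: le_partial_subsum.
Qed.

Lemma subsum_toE e y : subsum_to x e y <-> y = subsum x e.
Proof.
split=> [xey|->]; last exact: cvg_partial_subsum.
by rewrite /subsum (cvg_lim _ xey).
Qed.

Lemma le_subsum e d : (forall i, e i -> d i) -> subsum x e <= subsum x d.
Proof.
move=> ed; apply: ler_cvg_to (cvg_partial_subsum e) (cvg_partial_subsum d) _.
by apply: nearW => N; exact: le_partial_subsum.
Qed.

Lemma eq_subsum e d : e =1 d -> subsum x e = subsum x d.
Proof. by move=> /funext ->. Qed.

Lemma subsumU e d : (forall i, ~~ (e i && d i)) ->
  subsum x (fun i => e i || d i) = subsum x e + subsum x d.
Proof.
move=> ed; apply: cvg_lim => //.
have -> : partial_subsum x (fun i => e i || d i) =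
          partial_subsum x e \+ partial_subsum x d.
  apply: funext => N /=; rewrite /partial_subsum -big_split; apply: eq_bigr => i _.
  by move: (ed i); case: (e i); case: (d i); rewrite /= ?addr0 ?add0r.
exact: cvgD (cvg_partial_subsum e) (cvg_partial_subsum d).
Qed.

Lemma subsum0 : subsum x (fun=> false) = 0.
Proof. by apply: lim_near_cst => //; apply: nearW => N; rewrite /partial_subsum big1. Qed.

Lemma subsum1 i : subsum x (pred1 i) = x i.
Proof.
apply: lim_near_cst => //; exists i.+1 => // N /= iN.
rewrite /partial_subsum (big_cat_nat (leq0n i.+1) iN) /= big_nat_recr //= eqxx.
rewrite !big1_seq ?add0r ?addr0 // => j; rewrite /= mem_index_iota => /andP[].
  by move=> ij _; rewrite eq_sym ltn_eqF.
by move=> _ ji; rewrite ltn_eqF.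
Qed.

Lemma subsum_prefix k : subsum x (fun i => (i < k)%N) = \sum_(0 <= i < k) x i.
Proof.
apply: lim_near_cst => //; exists k => // N /= kN.
rewrite /partial_subsum (big_cat_nat (leq0n k) kN) /= [X in _ + X]big1_seq.
  by rewrite addr0; apply: eq_big_seq => j; rewrite mem_index_iota => /andP[_ ->].
by move=> j; rewrite /= mem_index_iota => /andP[kj _]; rewrite ltnNge kj.
Qed.

Lemma subsum_ge0 e : 0 <= subsum x e.
Proof. by rewrite -subsum0; apply: le_subsum. Qed.

Lemma le_term_subsum e i : e i -> x i <= subsum x e.
Proof. by move=> ei; rewrite -subsum1; apply: le_subsum => j /eqP ->. Qed.

Lemma subsum_subset_eq e d : (forall i, e i -> d i) ->
  subsum x e = subsum x d -> e =1 d.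
Proof.
move=> ed esum i; apply/idP/idP => [/ed //|di]; apply: contraT => nei.
have disj j : ~~ (e j && pred1 i j) by apply: contraNN nei => /andP[ej /eqP <-].
have : subsum x e + x i <= subsum x d.
  rewrite -subsum1 -subsumU //; apply: le_subsum => j /orP[/ed //|/eqP -> //].
by rewrite esum -lerBrDl subrr leNgt x_gt0.
Qed.

Lemma subsum_splitAt e k : subsum x e = subsum x (fun i => (i < k)%N && e i) +
  (if e k then x k else 0) + subsum x (fun i => (k < i)%N && e i).
Proof.
have mid : subsum x (fun i => (i == k) && e i) = if e k then x k else 0.
  case: ifP => ek; [rewrite -subsum1 | rewrite -subsum0];
    by apply: eq_subsum => i /=; case: (eqVneq i k) => [->|]; rewrite ?ek.
rewrite -mid -!subsumU.
- by apply: eq_subsum => i; case: ltngtP; rewrite /= ?orbF.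
- by move=> i; case: (ltngtP i k) => _; rewrite ?andbF.
- by move=> i; case: (ltngtP i k) => _; rewrite ?andbF.
Qed.

Lemma tail_split k : tail x k = x k + tail x k.+1.
Proof.
rewrite /tail (subsum_splitAt _ k) leqnn.
rewrite (@eq_subsum _ (fun=> false)) => [|i]; last by rewrite ltnNge andNb.
rewrite subsum0 add0r; congr (_ + _); apply: eq_subsum => i.
by apply/andP/idP => [[]//|ki]; split=> //; exact: ltnW.
Qed.

Lemma le_tail k m : (k <= m)%N -> tail x m <= tail x k.
Proof. by move=> km; apply: le_subsum => i; exact: leq_trans. Qed.

Lemma le_term_tail k : x k <= tail x k.
Proof. exact: le_term_subsum. Qed.

Lemma exists_tail_lt eps : 0 < eps -> exists k, tail x k < eps.
Proof.
move=> eps_gt0; have [L xL] := x_summable.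
have tailE N : tail x N = L - \sum_(0 <= i < N) x i.
  rewrite -subsum_prefix -[L](cvg_lim _ xL) //.
  rewrite [lim _](_ : _ = subsum x (fun i => (i < N)%N || (N <= i)%N)).
    by rewrite subsumU ?[_ + tail _ _]addrC ?addrK // => i; rewrite ltnNge andNb.
  by rewrite (@eq_subsum _ (fun=> true)) // => i; rewrite ltnNge orNb.
have /cvgrPdist_lt /(_ eps eps_gt0) [N _ /(_ N (leqnn N)) /= xN] := xL.
by exists N; rewrite tailE; apply: le_lt_trans (ler_norm _) xN.
Qed.

Lemma kakeya_condition : nonincr_seq x -> interval_filling x ->
  forall n, x n <= tail x n.+1.
Proof.
move=> /nonincreasing_seqP x_noninc x_if n; rewrite leNgt; apply/negP => tail_lt.
have [/midf_lt[lt_z z_lt] /midf_le[le_z z_le]] := (tail_lt, ltW tail_lt).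
have achieved_tail : achievement_set x (tail x n.+1).
  by exists (fun i => (n.+1 <= i)%N); apply/subsum_toE.
have achieved_term : achievement_set x (x n).
  by exists (pred1 n); apply/subsum_toE; rewrite subsum1.
have [e /subsum_toE ez] := x_if _ _ _ achieved_tail achieved_term le_z z_le.
case: (pselect (exists2 i, (i <= n)%N & e i)) => [[i /x_noninc xni ei]|].
  by have := le_term_subsum _ _ ei; rewrite -ez => /(le_trans xni); rewrite leNgt z_lt.
move=> /forall2NP e_tail; have : subsum x e <= tail x n.+1.
  by apply: le_subsum => i ei; rewrite ltnNge; apply/negP => ile; case: (e_tail i).
by rewrite -ez leNgt lt_z.
Qed.

Lemma representations0 : representations x 0 = [set fun=> false].
Proof.
apply/seteqP; split=> e /=; last by move=> ->; apply/subsum_toE; rewrite subsum0.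
move=> /subsum_toE e0; apply/funext => i; apply/esym.
by apply: (subsum_subset_eq (fun=> false) e) => //; rewrite subsum0.
Qed.

Section Greedy.
Hypothesis x_kakeya : forall k, x k <= tail x k.+1.

Fixpoint greedy (n : nat) (z : R) (k : nat) : R :=
  if k is k'.+1 then
    let s := greedy n z k' in s + (if (n <= k')%N && (s + x k' <= z) then x k' else 0)
  else 0.

Lemma greedyE n z k :
  greedy n z k = partial_subsum x (fun i => (n <= i)%N && (greedy n z i + x i <= z)) k.
Proof.
elim: k => [|k IH]; first by rewrite /partial_subsum big_geq.
by rewrite /partial_subsum big_nat_recr //= -/(partial_subsum _ _ _) -IH.
Qed.

Lemma greedy_prefix n z k : (k <= n)%N -> greedy n z k = 0.
Proof.
elim: k => [|k IH] // kn /=; rewrite IH ?(ltnW kn) // add0r.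
by rewrite leqNgt kn.
Qed.

Lemma greedy_slack n z k : 0 <= z <= tail x n -> (n <= k)%N ->
  greedy n z k <= z <= greedy n z k + tail x k.
Proof.
move=> z_range; elim: k => [|k IH].
  by rewrite leqn0 => /eqP n0; move: z_range; rewrite n0 /= add0r.
rewrite leq_eqVlt => /orP[/eqP <-|]; first by rewrite greedy_prefix // add0r.
rewrite ltnS => nk; have /andP[g_le le_g] := IH nk; rewrite /= nk /=.
case: ifP => [step_le|/negbT]; first by rewrite step_le -addrA -tail_split.
rewrite -ltNge addr0 g_le => lt_step; apply: le_trans (ltW lt_step) _.
by rewrite lerD2l x_kakeya.
Qed.

Lemma tail_filling n z : 0 <= z <= tail x n ->
  exists2 e : nat -> bool, (forall i, e i -> (n <= i)%N) & subsum x e = z.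
Proof.
move=> z_range; exists (fun i => (n <= i)%N && (greedy n z i + x i <= z)).
  by move=> i /andP[].
apply: cvg_lim => //; rewrite -(funext (greedyE n z)).
apply/cvgrPdist_le => eps eps_gt0; have [k tail_k] := exists_tail_lt _ eps_gt0.
exists (maxn k n) => // N /=; rewrite geq_max => /andP[kN nN].
have /andP[g_le le_g] := greedy_slack n z N z_range nN.
rewrite ger0_norm ?subr_ge0 // lerBlDl (le_trans le_g) // lerD2l.
exact: le_trans (le_tail _ _ kN) (ltW tail_k).
Qed.

End Greedy.

Lemma tail_eq_of_reps_le2 : (forall k, x k <= tail x k.+1) ->
  (forall y, achievement_set x y -> (representations x y #<= `I_2)%card) ->
  forall n, x n = tail x n.+1.
Proof.
move=> x_kakeya reps_le2 n; apply/eqP; rewrite eq_le x_kakeya /= leNgt.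
apply/negP => gap.
have /exists_tail_lt [k tail_k] : 0 < tail x n.+1 - x n by rewrite subr_gt0.
pose m := maxn k n.+1; have nm : (n < m)%N by rewrite leq_max leqnn orbT.
have xm_lt : x m < tail x n.+1 - x n.
  apply: le_lt_trans (le_term_tail m) (le_lt_trans (le_tail _ _ _) tail_k).
  exact: leq_maxl.
have [T T_gt Tsum] : exists2 T : nat -> bool,
    (forall i, T i -> (m < i)%N) & subsum x T = x m.
  by apply: tail_filling => //; rewrite ltW ?x_kakeya.
have [U U_gt Usum] : exists2 U : nat -> bool,
    (forall i, U i -> (n < i)%N) & subsum x U = x n + x m.
  apply: tail_filling => //; rewrite addr_ge0 ?ltW //=; lra.
pose V i := (i == n) || (i == m); pose W i := (i == n) || T i.
have Vsum : subsum x V = x n + x m.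
  rewrite subsumU ?subsum1 // => i; apply/negP => /andP[/eqP -> /eqP nm_eq].
  by rewrite nm_eq ltnn in nm.
have Wsum : subsum x W = x n + x m.
  rewrite subsumU ?subsum1 ?Tsum // => i; apply/negP => /andP[/eqP -> /T_gt mn].
  by have := ltn_trans nm mn; rewrite ltnn.
have [Ay VW VU WU] : [/\ achievement_set x (x n + x m), V <> W, V <> U & W <> U].
  split; first by exists V; apply/subsum_toE.
  - move=> /(congr1 (fun f => f m)); rewrite /V /W eqxx orbT eq_sym ltn_eqF //=.
    by case: (boolP (T m)) => // /T_gt; rewrite ltnn.
  - move=> /(congr1 (fun f => f n)); rewrite /V eqxx /=.
    by case: (boolP (U n)) => // /U_gt; rewrite ltnn.
  - move=> /(congr1 (fun f => f n)); rewrite /W eqxx /=.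
    by case: (boolP (U n)) => // /U_gt; rewrite ltnn.
by apply: (card_le_I2_no_three _ _ _ _ (reps_le2 _ Ay) _ _ _ VW VU WU); apply/subsum_toE.
Qed.

Lemma halving_of_range_card_fn_12 : nonincr_seq x -> interval_filling x ->
  range_card_fn_12 x -> forall n, x n = 2 * x n.+1.
Proof.
move=> x_noninc x_if [reps12 _] n.
have x_tail := tail_eq_of_reps_le2 (kakeya_condition x_noninc x_if)
  (fun y Ay => card_eq_I1_I2_le _ (reps12 y Ay)).
by rewrite x_tail tail_split -x_tail; lra.
Qed.

Section Halving.
Hypothesis x_half : forall n, x n = 2 * x n.+1.

Lemma tail_halving k : tail x k = 2 * x k.
Proof.
have u_const j : tail x j - 2 * x j = tail x 0 - 2 * x 0.
  elim: j => [|j <-] //; have := tail_split j; have := x_half j; lra.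
suff u0 : tail x 0 - 2 * x 0 = 0 by have := u_const k; lra.
apply/eqP; rewrite -normr_le0; apply/ler_addgt0Pr => eps /exists_tail_lt[j tail_j].
have xj_gt0 := x_gt0 j; have xj_le := le_term_tail j.
by rewrite add0r -(u_const j) ler_norml; apply/andP; split; lra.
Qed.

Lemma halving_first_diff e d k : subsum x e = subsum x d ->
  (forall i, (i < k)%N -> e i = d i) -> e k -> ~~ d k ->
  (forall i, (k < i)%N -> ~~ e i) /\ (forall i, (k < i)%N -> d i).
Proof.
move=> ed agree ek ndk.
pose E i := (k < i)%N && e i; pose D i := (k < i)%N && d i.
have ED : x k + subsum x E = subsum x D.
  move: ed; rewrite (subsum_splitAt e k) (subsum_splitAt d k) ek (negbTE ndk).
  rewrite (@eq_subsum (fun i => (i < k)%N && e i) (fun i => (i < k)%N && d i)).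
    by rewrite addr0 -addrA => /addrI.
  by move=> i; case: ltnP => // /agree ->.
have D_le : subsum x D <= tail x k.+1 by apply: le_subsum => i /andP[].
have tail_k : tail x k.+1 = x k by rewrite tail_halving -x_half.
have E_ge0 := subsum_ge0 E.
have E_empty : (fun=> false) =1 E.
  by apply: subsum_subset_eq => //; rewrite subsum0; lra.
have D_full : D =1 (fun i => (k < i)%N).
  by apply: subsum_subset_eq => [i /andP[]//|]; rewrite -/(tail x k.+1); lra.
split=> i ki; first by have := E_empty i; rewrite /E ki /= => <-.
by have := D_full i; rewrite /D ki.
Qed.

Lemma halving_reps_ends e d : subsum x e = subsum x d -> e <> d ->
  ((\forall i \near \oo, e i) /\ ~ (\forall i \near \oo, d i)) \/
  (~ (\forall i \near \oo, e i) /\ (\forall i \near \oo, d i)).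
Proof.
have ends k (f g : nat -> bool) : (forall i, (k < i)%N -> ~~ f i) ->
    (forall i, (k < i)%N -> g i) ->
    ~ (\forall i \near \oo, f i) /\ (\forall i \near \oo, g i).
  move=> f_end g_end; split; last by exists k.+1.
  move=> [N _ fN]; have := fN (maxn N k.+1) (leq_maxl _ _).
  by apply/negP/f_end; rewrite leq_max ltnSn orbT.
move=> ed /exists_first_diff[k [ekdk agree]].
have agree' i : (i < k)%N -> d i = e i by move/agree.
case ek: (e k); case dk: (d k); rewrite ?ek ?dk // in ekdk.
  by have [] := halving_first_diff _ _ _ ed agree ek (negbT dk) => /ends/[apply]; right.
have [] := halving_first_diff _ _ _ (esym ed) agree' dk (negbT ek).
by move=> /ends/[apply] -[]; left.
Qed.

Lemma representations_le_I2 y : (representations x y #<= `I_2)%card.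
Proof.
pose ends (e : nat -> bool) : nat := `[< \forall i \near \oo, e i >].
have ends_inj : {in representations x y &, injective ends}.
  move=> e d; rewrite !inE /= => /subsum_toE ye /subsum_toE yd.
  case: (pselect (e = d)) => // /(halving_reps_ends _ _ (etrans (esym ye) yd)).
  rewrite /ends => -[[ee nd]|[ne de]].
    by rewrite (asboolT ee) (asboolF nd).
  by rewrite (asboolF ne) (asboolT de).
rewrite -(card_le_eql (inj_card_eq ends_inj)); apply: subset_card_le.
by move=> _ [e _ <-]; rewrite /ends; case: asboolP.
Qed.

Lemma card_representations_x0 : (representations x (x 0%N) #= `I_2)%card.
Proof.
have reps_x0 : representations x (x 0%N) (pred1 0%N) /\
               representations x (x 0%N) (fun i => (0 < i)%N).
  by split; apply/subsum_toE; rewrite ?subsum1 -/(tail x 1) ?tail_halving -?x_half.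
have reps_x0_ne : representations x (x 0%N) !=set0 by exists (pred1 0%N); case: reps_x0.
have [/card_eqPle[le_I1 _]|//] := card_le_I2_cases _ reps_x0_ne (representations_le_I2 _).
case: reps_x0 => r1 r2.
by have /(congr1 (fun f => f 0%N)) := card_le_I1_eq _ _ _ le_I1 r1 r2.
Qed.

Lemma range_card_fn_12_of_halving : range_card_fn_12 x.
Proof.
split; [|split].
- move=> y [e ye]; apply: card_le_I2_cases; first by exists e.
  exact: representations_le_I2.
- exists 0; rewrite /card_fn_is representations0; split; last exact: card_set1.
  by exists (fun=> false); apply/subsum_toE; rewrite subsum0.
- exists (x 0%N); split; last exact: card_representations_x0.
  by exists (pred1 0%N); apply/subsum_toE; rewrite subsum1.
Qed.

End Halving.

End Subsums.

Lemma halvingP (R : realFieldType) (x : nat -> R) :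
  (forall n, x n = 2 * x n.+1) <-> (forall n, x n = x 0%N / 2 ^+ n).
Proof.
split=> [x_half|xE] n; last first.
  by rewrite (xE n) (xE n.+1) exprSr; field; rewrite expf_neq0 // pnatr_eq0.
elim: n => [|n IH]; first by rewrite expr0 divr1.
by rewrite exprSr invfM mulrA -IH; have := x_half n; lra.
Qed.

Theorem corollary3p8 (R : realType) (x : nat -> R)
  (xpos : forall n, 0 < x n) (xsum : summable_seq x)
  (xdec : nonincr_seq x) (xif : interval_filling x) :
  range_card_fn_12 x <-> exists c : R, 0 < c /\ forall n, x n = c / 2 ^+ n.
Proof.
split=> [x_range|[c [c_gt0 xE]]].
  have x_half := halving_of_range_card_fn_12 xpos xsum xdec xif x_range.
  by exists (x 0%N); split; [exact: xpos | apply/halvingP].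
apply: range_card_fn_12_of_halving xpos xsum _.
by apply/halvingP => n; rewrite !xE expr0 divr1.
Qed.
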